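(* There exist a DAG $G$ and positive integers $g$ and $r_0$ with $4\mid r_0$ such that $\mathrm{OPT}^{(2)}<\mathrm{OPT}^{(1)}$ and $\mathrm{OPT}^{(2)}<\mathrm{OPT}^{(4)}$, where $\mathrm{OPT}^{(j)}$ denotes the MPP optimum of $G$ with $j$ processors, each having fast memory of size $r_0/j$ (same $g$ in all cases).
   Context: Multiprocessor red-blue pebbling (MPP). Input: a DAG $G=(V,E)$ with $n=|V|$ and positive integers $k$ (number of processors), $r$ (fast-memory size per processor), $g$ (cost of an I/O step). $\Delta_{in}$ denotes the maximum in-degree of $G$; sources/sinks are nodes of in-degree/out-degree $0$. A configuration is a tuple $(R^1,\dots,R^k,B)$ of subsets of $V$ ($R^j$ = nodes carrying a red pebble of processor $j$, $B$ = nodes carrying a blue pebble); it is valid if $|R^j|\le r$ for all $j$. The initial configuration has all sets empty; a configuration is terminal if every sink lies in $B\cup\bigcup_j R^j$. The transition rules are: (R1) for some $m\le k$, pairwise distinct processors $j_1,\dots,j_m$ and nodes $v_1,\dots,v_m$ with $v_i\in R^{j_i}$, add each $v_i$ to $B$ (cost $g$); (R2) for some $m\le k$, pairwise distinct processors $j_1,\dots,j_m$ and nodes $v_1,\dots,v_m\in B$, add each $v_i$ to $R^{j_i}$ (cost $g$); (R3) for some $m\le k$, pairwise distinct processors $j_1,\dots,j_m$ and nodes $v_1,\dots,v_m$ such that every in-neighbor of $v_i$ lies in $R^{j_i}$, add each $v_i$ to $R^{j_i}$ (cost $1$); (R4) remove a single red or blue pebble (cost $0$). A pebbling strategy is a sequence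 of valid configurations starting at the initial configuration and ending at a terminal one, each obtained from its predecessor by one rule; its cost is the sum of the costs of the rules applied. $\mathrm{OPT}$ denotes the minimum cost of a pebbling strategy. Applications of (R1),(R2) are called I/O steps and applications of (R3) compute steps. *)

From mathcomp Require Import all_boot.
Set Implicit Arguments. Unset Strict Implicit. Unset Printing Implicit Defensive.

(* A DAG on nodes 'I_n is an edge relation e (e u v = edge u -> v) with no cycle. *)
Definition acyclic (n : nat) (e : rel 'I_n) : Prop :=
  forall x y, e x y -> ~~ connect e y x.

(* Configuration (R^1,...,R^k, B): R j = red pebbles of processor j, B = blue pebbles. *)
Definition config (n k : nat) := ({ffun 'I_k -> {set 'I_n}} * {set 'I_n})%type.

Definition valid_config (n k r : nat) (C : config n k) : Prop :=
  forall j : 'I_k, #|C.1 j| <= r.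

Definition init_config (n k : nat) : config n k := ([ffun _ => set0], set0).

Definition is_sink (n : nat) (e : rel 'I_n) (v : 'I_n) : bool := [forall w, ~~ e v w].

Definition terminal (n k : nat) (e : rel 'I_n) (C : config n k) : Prop :=
  forall v, is_sink e v -> v \in C.2 \/ exists j : 'I_k, v \in C.1 j.

Definition add_red (n k : nat) (R : {ffun 'I_k -> {set 'I_n}}) (P : {set 'I_k})
  (v : 'I_k -> 'I_n) : {ffun 'I_k -> {set 'I_n}} :=
  [ffun j => if j \in P then v j |: R j else R j].

Inductive step (n k : nat) (e : rel 'I_n) (g : nat) : config n k -> config n k -> nat -> Prop :=
| R1 : forall (R : {ffun 'I_k -> {set 'I_n}}) (B : {set 'I_n}) (P : {set 'I_k}) (v : 'I_k -> 'I_n),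
    (forall j, j \in P -> v j \in R j) ->
    step e g (R, B) (R, B :|: [set v j | j in P]) g
| R2 : forall (R : {ffun 'I_k -> {set 'I_n}}) (B : {set 'I_n}) (P : {set 'I_k}) (v : 'I_k -> 'I_n),
    (forall j, j \in P -> v j \in B) ->
    step e g (R, B) (add_red R P v, B) g
| R3 : forall (R : {ffun 'I_k -> {set 'I_n}}) (B : {set 'I_n}) (P : {set 'I_k}) (v : 'I_k -> 'I_n),
    (forall j, j \in P -> forall u, e u (v j) -> u \in R j) ->
    step e g (R, B) (add_red R P v, B) 1
| R4red : forall (R : {ffun 'I_k -> {set 'I_n}}) (B : {set 'I_n}) (j : 'I_k) x, x \in R j ->
    step e g (R, B) ([ffun j' => if j' == j then R j :\ x else R j'], B) 0
| R4blue : forall (R : {ffun 'I_k -> {set 'I_n}}) (B : {set 'I_n}) x, x \in B ->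
    step e g (R, B) (R, B :\ x) 0.

Inductive pebbling (n k : nat) (e : rel 'I_n) (r g : nat) : config n k -> nat -> Prop :=
| peb_done : forall C, terminal e C -> pebbling e r g C 0
| peb_step : forall C C' s c, step e g C C' s -> valid_config r C' ->
    pebbling e r g C' c -> pebbling e r g C (s + c).

Definition has_strategy (n : nat) (e : rel 'I_n) (k r g c : nat) : Prop :=
  pebbling e r g (init_config n k) c.

Definition is_OPT (n : nat) (e : rel 'I_n) (k r g c : nat) : Prop :=
  has_strategy e k r g c /\ forall c', has_strategy e k r g c' -> c <= c'.

From mathcomp Require Import all_boot.
From Stdlib Require Import Classical Wf_nat.
Set Implicit Arguments. Unset Strict Implicit. Unset Printing Implicit Defensive.

(* Take the star with centre 0 and five leaves, g = 5 and r0 = 8.  Every leaf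
   is a sink, so every leaf must be computed, and any I/O step already costs 5.
   One processor therefore pays at least 5 compute steps, while two processors
   with four red pebbles each compute the centre and then the leaves two at a
   time, for a cost of 4.  With four processors of two red pebbles, a processor
   holding a leaf also holds the centre, so without I/O at most four leaves are
   ever covered: again the cost is at least 5. *)

Lemma leq_card_bigcup (I T : finType) (P : pred I) (F : I -> {set T}) :
  #|\bigcup_(i | P i) F i| <= \sum_(i | P i) #|F i|.
Proof.
elim/big_rec2: _ => [|i n U _ IH]; first by rewrite cards0.
exact: leq_trans (leq_card_setU _ _) (leq_add (leqnn _) IH).
Qed.

Lemma card_setU1I (T : finType) (x : T) (A S : {set T}) :
  #|(x |: A) :&: S| <= #|A :&: S|.+1.
Proof.
rewrite setIUl -add1n; apply: leq_trans (leq_card_setU _ _) _.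
by rewrite leq_add2r -(cards1 x) subset_leq_card ?subsetIl.
Qed.

Section Pebbling.

Variables (n k : nat) (e : rel 'I_n) (r g : nat).

Lemma OPT_exists c : has_strategy e k r g c -> exists2 c', is_OPT e k r g c' & c' <= c.
Proof.
move=> hc; have [c' [[hc' c'_min] _]] :=
  dec_inh_nat_subset_has_unique_least_element _ (fun c => classic _) (ex_intro _ c hc).
by exists c'; [split=> // c'' /c'_min /leP | apply/leP/c'_min].
Qed.

Lemma card_add_red (R : {ffun 'I_k -> {set 'I_n}}) (P : {set 'I_k}) v j b :
  #|R j| <= b -> #|add_red R P v j| <= b.+1.
Proof.
move=> Rj; rewrite ffunE; case: (j \in P); last exact: leqW.
by rewrite cardsU1 -add1n leq_add ?leq_b1.
Qed.

Lemma pebbling_compute (R : {ffun 'I_k -> {set 'I_n}}) B (P : {set 'I_k}) v c :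
  (forall j, j \in P -> forall u, e u (v j) -> u \in R j) ->
  valid_config r (add_red R P v, B) -> pebbling e r g (add_red R P v, B) c ->
  pebbling e r g (R, B) c.+1.
Proof. by move=> preds valid peb; rewrite -add1n; apply: (peb_step _ valid peb); apply: R3. Qed.

Lemma pebbling_evict (R : {ffun 'I_k -> {set 'I_n}}) B j x c :
  x \in R j -> valid_config r (R, B) ->
  pebbling e r g ([ffun j' => if j' == j then R j :\ x else R j'], x |: B) c ->
  pebbling e r g (R, B) (g + c).
Proof.
move=> xR valid peb; apply: (peb_step (C' := (R, x |: B)) _ valid).
  have := @R1 n k e g R B [set j] (fun=> x).
  by rewrite imset_set1 setUC; apply=> j'; rewrite inE => /eqP ->.
rewrite -[c]add0n; apply: (peb_step _ _ peb); first exact: R4red.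
move=> j'; rewrite ffunE; case: (j' == j); last exact: valid.
exact: leq_trans (subset_leq_card (subsetDl _ _)) (valid j).
Qed.

End Pebbling.

(* While slow memory is empty a compute step adds at most one pebble, and any
   I/O step alone already pays for all of [S]. *)
Lemma one_processor_cost n (e : rel 'I_n) r g (S : {set 'I_n}) (C : config n 1) c :
  {in S, forall v, is_sink e v} -> #|S| <= g ->
  pebbling e r g C c -> C.2 = set0 -> #|S| <= #|C.1 ord0 :&: S| + c.
Proof.
move=> sinkS Sg; elim=> {C c} [C term | C C' s c st _ _ IH] noB.
  rewrite addn0 subset_leq_card //; apply/subsetP => v vS; rewrite inE vS andbT.
  case: (term v (sinkS v vS)) => [|[j]]; first by rewrite noB inE.
  by rewrite (ord1 j).
case: st noB IH => /= [R B P v _ _ _|R B P v _ _ _|R B P v _ -> /(_ erefl) IH|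
                       R B j x _ -> /(_ erefl) IH|R B x xB noB _].
- by rewrite addnCA (leq_trans Sg) ?leq_addr.
- by rewrite addnCA (leq_trans Sg) ?leq_addr.
- apply: leq_trans IH _; rewrite addnCA add1n -addSn leq_add2r ffunE.
  by case: ifP => _; [exact: card_setU1I | exact: leqnSn].
- apply: leq_trans IH _; rewrite add0n leq_add2r ffunE (ord1 j) eqxx.
  exact/subset_leq_card/setSI/subsetDl.
- by rewrite noB inE in xB.
Qed.

Section Star.

Variable m : nat.

Definition star : rel 'I_m.+1 := fun u v => (u == ord0) && (v != ord0).

Definition leaves : {set 'I_m.+1} := [set~ ord0].

Lemma star_acyclic : acyclic star.
Proof.
move=> x y /andP [/eqP -> y0]; apply/negP => /connectP [[_ /= y_eq|z p /=]].
  by rewrite y_eq eqxx in y0.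
by rewrite /star (negbTE y0).
Qed.

Lemma card_leaves : #|leaves| = m.
Proof. by rewrite cardsC1 card_ord. Qed.

Lemma is_sink_leaf v : v \in leaves -> is_sink star v.
Proof. by rewrite !inE => v0; apply/forallP => w; rewrite /star (negbTE v0). Qed.

Lemma pebbling_star_center k r g (R : {ffun 'I_k -> {set 'I_m.+1}}) B (P : {set 'I_k}) c :
  valid_config r (add_red R P (fun=> ord0), B) ->
  pebbling star r g (add_red R P (fun=> ord0), B) c -> pebbling star r g (R, B) c.+1.
Proof. by apply: pebbling_compute => j _ u; rewrite /star eqxx andbF. Qed.

Lemma pebbling_star_leaves k r g (R : {ffun 'I_k -> {set 'I_m.+1}}) B (P : {set 'I_k}) v c :
  {in P, forall j, ord0 \in R j} -> valid_config r (add_red R P v, B) ->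
  pebbling star r g (add_red R P v, B) c -> pebbling star r g (R, B) c.+1.
Proof.
by move=> center; apply: pebbling_compute => j jP u /andP [/eqP -> _]; apply: center.
Qed.

(* With two red pebbles a processor holding a leaf must also hold the centre,
   so it never holds two leaves at once. *)
Lemma card_leaves_add (A : {set 'I_m.+1}) v :
  #|v |: A| <= 2 -> (v \in leaves -> ord0 \in A) -> #|A :&: leaves| <= 1 ->
  #|(v |: A) :&: leaves| <= 1.
Proof.
rewrite /leaves -!setDE => small center one.
have [->|v0] := eqVneq v ord0.
  by rewrite setDUl setDv set0U.
have A0 : ord0 \in v |: A by rewrite setU1r // center // !inE.
by rewrite (cardsD1 ord0) A0 in small.
Qed.

Lemma terminal_star_leaves_le k (C : config m.+1 k) :
  terminal star C -> C.2 = set0 -> (forall j, #|C.1 j :&: leaves| <= 1) -> m <= k.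
Proof.
move=> term noB one; rewrite -card_leaves.
apply: (@leq_trans #|\bigcup_j (C.1 j :&: leaves)|).
  apply/subset_leq_card/subsetP => v vL; apply/bigcupP.
  case: (term v (is_sink_leaf vL)) => [|[j vj]]; first by rewrite noB inE.
  by exists j; rewrite // inE vj.
apply: leq_trans (leq_card_bigcup _ (fun j => C.1 j :&: leaves)) _.
apply: (@leq_trans (\sum_(j < k) 1)); first exact: leq_sum.
by rewrite sum1_card card_ord.
Qed.

Lemma star_cost_ge_io k g (C : config m.+1 k) c : k < m ->
  pebbling star 2 g C c -> C.2 = set0 -> (forall j, #|C.1 j :&: leaves| <= 1) -> g <= c.
Proof.
move=> km; elim=> {C c} [C term | C C' s c st valid _ IH] noB one.
  by have := terminal_star_leaves_le term noB one; rewrite leqNgt km.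
case: st noB one IH valid => /= [R B P v _ _ _ _ _|R B P v _ _ _ _ _|
  R B P v preds -> one /(_ erefl) IH valid|R B j x _ -> one /(_ erefl) IH _|
  R B x xB noB _ _ _].
- exact: leq_addr.
- exact: leq_addr.
- apply: leqW (IH _) => j; have := valid j; rewrite /= ffunE.
  case: ifP => jP small; last exact: one.
  by apply: card_leaves_add => // vL; apply: preds; rewrite // /star eqxx -in_setC1.
- apply: IH => j'; rewrite ffunE; case: (j' == j); last exact: one.
  exact: leq_trans (subset_leq_card (setSI _ (subsetDl _ _))) (one j).
- by rewrite noB inE in xB.
Qed.

Hypothesis m_gt0 : 0 < m.

Lemma terminal_star k (C : config m.+1 k) :
  (forall v, v != ord0 -> v \in C.2 \/ exists j, v \in C.1 j) -> terminal star C.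
Proof.
move=> covered v sink_v; apply: covered; apply: contraTneq sink_v => ->.
by apply/forallPn; exists (Ordinal (m_gt0 : 1 < m.+1)).
Qed.

End Star.

Arguments star : clear implicits.
Arguments leaves : clear implicits.

Notation node i := (@Ordinal 6 i isT).

Lemma star_strategy_one : has_strategy (star 5) 1 8 5 6.
Proof.
apply: (pebbling_star_center (P := setT)).
  by move=> j; apply: card_add_red; rewrite ffunE cards0.
apply: (pebbling_star_leaves (P := setT) (v := fun=> node 1)).
  by move=> j _; rewrite !ffunE !inE.
  by move=> j; do 2 apply: card_add_red; rewrite ffunE cards0.
apply: (pebbling_star_leaves (P := setT) (v := fun=> node 2)).
  by move=> j _; rewrite !ffunE !inE.
  by move=> j; do 3 apply: card_add_red; rewrite ffunE cards0.
apply: (pebbling_star_leaves (P := setT) (v := fun=> node 3)).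
  by move=> j _; rewrite !ffunE !inE.
  by move=> j; do 4 apply: card_add_red; rewrite ffunE cards0.
apply: (pebbling_star_leaves (P := setT) (v := fun=> node 4)).
  by move=> j _; rewrite !ffunE !inE.
  by move=> j; do 5 apply: card_add_red; rewrite ffunE cards0.
apply: (pebbling_star_leaves (P := setT) (v := fun=> node 5)).
  by move=> j _; rewrite !ffunE !inE.
  by move=> j; do 6 apply: card_add_red; rewrite ffunE cards0.
apply: peb_done; apply: terminal_star => // - [[|[|[|[|[|[|?]]]]]] ?] //= _.
all: by right; exists ord0; rewrite !ffunE !inE.
Qed.

Lemma star_strategy_two : has_strategy (star 5) 2 4 5 4.
Proof.
apply: (pebbling_star_center (P := setT)).
  by move=> j; apply: card_add_red; rewrite ffunE cards0.
apply: (pebbling_star_leaves (P := setT) (v := fun j => if j == ord0 then node 1 else node 4)).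
  by move=> j _; rewrite !ffunE !inE.
  by move=> j; do 2 apply: card_add_red; rewrite ffunE cards0.
apply: (pebbling_star_leaves (P := setT) (v := fun j => if j == ord0 then node 2 else node 5)).
  by move=> j _; rewrite !ffunE !inE eqxx !orbT.
  by move=> j; do 3 apply: card_add_red; rewrite ffunE cards0.
apply: (pebbling_star_leaves (P := [set ord0]) (v := fun=> node 3)).
  by move=> j; rewrite inE => /eqP ->; rewrite !ffunE !inE.
  by move=> j; do 4 apply: card_add_red; rewrite ffunE cards0.
apply: peb_done; apply: terminal_star => // - [[|[|[|[|[|[|?]]]]]] ?] //= _; right.
- by exists ord0; rewrite !ffunE !inE.
- by exists ord0; rewrite !ffunE !inE.
- by exists ord0; rewrite !ffunE !inE.
- by exists (@Ordinal 2 1 isT); rewrite !ffunE !inE.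
- by exists (@Ordinal 2 1 isT); rewrite !ffunE !inE.
Qed.

Lemma star_strategy_four : has_strategy (star 5) 4 2 5 8.
Proof.
apply: (pebbling_star_center (P := setT)).
  by move=> j; apply: card_add_red; rewrite ffunE cards0.
apply: (pebbling_star_leaves (P := [set ord0]) (v := fun=> node 5)).
  by move=> j _; rewrite !ffunE !inE.
  by move=> j; do 2 apply: card_add_red; rewrite ffunE cards0.
apply: (pebbling_evict (j := ord0) (x := node 5) (c := 1)).
  by rewrite !ffunE !inE.
  by move=> j; do 2 apply: card_add_red; rewrite ffunE cards0.
set R := [ffun j => _].
have -> : R = [ffun=> [set ord0]].
  apply/ffunP => j; rewrite !ffunE !inE eqxx setU0.
  by case: (j == ord0); rewrite // setU1K // inE.
apply: (pebbling_star_leaves (P := setT)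
          (v := fun j => nth ord0 [:: node 1; node 2; node 3; node 4] j)).
  by move=> j _; rewrite ffunE inE.
  by move=> j; apply: card_add_red; rewrite ffunE cards1.
apply: peb_done; apply: terminal_star => // - [[|[|[|[|[|[|?]]]]]] ?] //= _.
- by right; exists ord0; rewrite !ffunE !inE.
- by right; exists (@Ordinal 4 1 isT); rewrite !ffunE !inE.
- by right; exists (@Ordinal 4 2 isT); rewrite !ffunE !inE.
- by right; exists (@Ordinal 4 3 isT); rewrite !ffunE !inE.
- by left; rewrite !inE.
Qed.

Theorem lemma10 :
  exists (n : nat) (e : rel 'I_n) (g r0 c1 c2 c4 : nat),
    [/\ acyclic e, 0 < g, 0 < r0 & 4 %| r0] /\
    [/\ is_OPT e 1 r0 g c1, is_OPT e 2 (r0 %/ 2) g c2 & is_OPT e 4 (r0 %/ 4) g c4] /\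
    c2 < c1 /\ c2 < c4.
Proof.
have [c1 opt1 _] := OPT_exists star_strategy_one.
have [c2 opt2 c2_le4] := OPT_exists star_strategy_two.
have [c4 opt4 _] := OPT_exists star_strategy_four.
exists 6, (star 5), 5, 8, c1, c2, c4.
split; first by split=> //; apply: star_acyclic.
split; first by split.
have c1_ge5 : 5 <= c1.
  have := one_processor_cost (@is_sink_leaf 5) _ opt1.1 erefl.
  by rewrite card_leaves ffunE set0I cards0; apply.
have c4_ge5 : 5 <= c4.
  by apply: (star_cost_ge_io _ opt4.1) => // j; rewrite ffunE set0I cards0.
by split; apply: leq_ltn_trans c2_le4 _.
Qed.
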